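(* Let $Y,Y'$ be unbounded connected graphs with $Y'$ narrow. Suppose there are a constant $C\ge1$ and a metrically proper injective map $f:V(Y)\to V(Y')$ with $d_{Y'}(f(x),f(y))\le C\,d_Y(x,y)+C$ for all vertices $x,y$ of $Y$. Then $Y$ is narrow.
   Context: $V(Y)$ is the vertex set and $d_Y$ the path metric (edges of length 1). A map is metrically proper if preimages of bounded sets are bounded. A vertex subset $Z$ is $\mu$-coarsely connected if any two points of $Z$ are joined by a chain in $Z$ with consecutive distances at most $\mu$. An unbounded connected graph $Y$ is narrow if for each $\mu\ge1$ there is $L(\mu)\ge 1$ such that any $L(\mu)+1$ unbounded $\mu$-coarsely connected vertex subsets of $Y$ include two that intersect. *)

From Stdlib Require Import Reals Lra Classical ClassicalEpsilon Relation_Operators.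
Open Scope R_scope.

Record graph := Graph {
  V : Type;
  adj : V -> V -> Prop;
  adj_sym : forall x y, adj x y -> adj y x;
  adj_irrefl : forall x, ~ adj x x
}.

Inductive walk (G : graph) : nat -> V G -> V G -> Prop :=
| walk0 : forall x, walk G 0 x x
| walkS : forall n x y z, adj G x y -> walk G n y z -> walk G (S n) x z.

Definition connected (G : graph) : Prop :=
  forall x y : V G, exists n, walk G n x y.

(* Path metric d_G (edges of length 1): the least length of a walk
   (chosen by classical choice; meaningful for connected graphs). *)
Definition gdist (G : graph) (x y : V G) : nat :=
  epsilon (inhabits 0%nat)
    (fun n => walk G n x y /\ forall m, walk G m x y -> (n <= m)%nat).

Definition bounded (G : graph) (S : V G -> Prop) : Prop :=
  exists (x0 : V G) (r : nat), forall z, S z -> (gdist G x0 z <= r)%nat.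

Definition unbounded_graph (G : graph) : Prop :=
  ~ bounded G (fun _ => True).

Definition metrically_proper (G G' : graph) (f : V G -> V G') : Prop :=
  forall B : V G' -> Prop, bounded G' B -> bounded G (fun x => B (f x)).

Definition coarsely_connected (G : graph) (mu : R) (Z : V G -> Prop) : Prop :=
  forall x y, Z x -> Z y ->
    clos_refl_trans (V G) (fun a b => Z a /\ Z b /\ INR (gdist G a b) <= mu) x y.

Definition narrow (G : graph) : Prop :=
  forall mu : R, 1 <= mu ->
    exists L : nat, (1 <= L)%nat /\
      forall Z : nat -> (V G -> Prop),
        (forall i, (i <= L)%nat -> ~ bounded G (Z i) /\ coarsely_connected G mu (Z i)) ->
        exists i j, (i <= L)%nat /\ (j <= L)%nat /\ i <> j /\
          exists v, Z i v /\ Z j v.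

(* Push the family [Z i] forward along [f].  Properness keeps the images
   unbounded, the coarse Lipschitz bound turns [mu]-chains into
   [(C mu + C)]-chains, so narrowness of [Y'] makes two images meet, and
   injectivity pulls the common point back to a common point of the [Z i]. *)

From Pilot Require Import Defs.
From Stdlib Require Import Reals Lra Relation_Operators.
Open Scope R_scope.

Definition image_set {G G' : graph} (f : V G -> V G') (Z : V G -> Prop) :
  V G' -> Prop :=
  fun y => exists x, Z x /\ f x = y.

(* [Defs.bounded] is qualified because [Reals] exports a [bounded] on [R]. *)
Lemma image_set_unbounded {G G' : graph} (f : V G -> V G') (Z : V G -> Prop) :
  metrically_proper G G' f ->
  ~ Defs.bounded G Z -> ~ Defs.bounded G' (image_set f Z).
Proof.
  intros Hproper HZ Himg; apply HZ.
  destruct (Hproper _ Himg) as [x0 [r Hr]].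
  exists x0, r; intros z Hz; apply Hr; exists z; auto.
Qed.

Lemma image_set_coarsely_connected {G G' : graph} (f : V G -> V G')
    (C mu : R) (Z : V G -> Prop) :
  0 <= mu ->
  (forall x y, INR (gdist G' (f x) (f y)) <= C * INR (gdist G x y) + C) ->
  coarsely_connected G mu Z ->
  coarsely_connected G' (C * mu + C) (image_set f Z).
Proof.
  intros Hmu Hlip HZ y1 y2 [a1 [Ha1 <-]] [a2 [Ha2 <-]].
  pose proof (HZ a1 a2 Ha1 Ha2) as Hchain; clear Ha1 Ha2.
  induction Hchain as [a b [Za [Zb Hab]] | a | a b c _ IH1 _ IH2].
  - apply rt_step; split; [exists a; auto | split; [exists b; auto |]].
    specialize (Hlip a b).
    assert (HC : 0 <= C).
    { pose proof (pos_INR (gdist G' (f a) (f b))).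
      pose proof (pos_INR (gdist G a b)). nra. }
    nra.
  - apply rt_refl.
  - exact (rt_trans _ _ _ _ _ IH1 IH2).
Qed.

Theorem mainTheorem9 (Y Y' : graph) :
  connected Y -> unbounded_graph Y ->
  connected Y' -> unbounded_graph Y' -> narrow Y' ->
  forall (C : R) (f : V Y -> V Y'),
    1 <= C ->
    metrically_proper Y Y' f ->
    (forall x y, f x = f y -> x = y) ->
    (forall x y, INR (gdist Y' (f x) (f y)) <= C * INR (gdist Y x y) + C) ->
    narrow Y.
Proof.
  intros _ _ _ _ Hnarrow C f HC Hproper Hinj Hlip mu Hmu.
  destruct (Hnarrow (C * mu + C)) as [L [HL Hmeet]]; [nra |].
  exists L; split; [exact HL |].
  intros Z HZ.
  destruct (Hmeet (fun i => image_set f (Z i)))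
    as [i [j [Hi [Hj [Hij [v [[x1 [Hx1 <-]] [x2 [Hx2 Hf]]]]]]]]].
  - intros i Hi; destruct (HZ i Hi) as [Hunb Hcc]; split.
    + exact (image_set_unbounded f (Z i) Hproper Hunb).
    + apply image_set_coarsely_connected; [lra | exact Hlip | exact Hcc].
  - exists i, j; repeat split; auto.
    exists x1; split; [exact Hx1 |].
    rewrite (Hinj x1 x2 (eq_sym Hf)); exact Hx2.
Qed.
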